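(* Let $M$ be the commutative monoid with zero defined below. For every right congruence $\rho$ of finite index on $M$ with $\mathcal{L}\subseteq\rho$ we have $(d,e)\in\rho$, although $(d,e)\notin\mathcal{L}$. Consequently the action of $M$ on its $\mathcal{L}$-classes is not residually finite.
   Context: Let $\tau:\mathbb{Z}\setminus\{0\}\to\mathbb{Z}$, $\tau(2^k(2r+1))=\frac{2}{3}(2^{2\lceil k/2\rceil}-1)$ ($k,r\in\mathbb{Z}$, $k\ge0$). Let $M$ be the commutative monoid with zero $0$ given by generators $a,a^{-1},b_i,c_i$ ($i\in\mathbb{Z}$), $d,e$ and relations $aa^{-1}=a^{-1}a=1$; $b_ic_j=d$ if $i=j$ and $b_ic_j=a^{\tau(j-i)}e$ if $i\neq j$; and $b_ib_j=b_id=b_ie=c_jc_k=c_jd=c_je=dd=de=ee=0$ for all $i,j,k\in\mathbb{Z}$. Its elements have distinct normal forms $a^p$, $a^pb_i$, $a^pc_i$, $a^pd$, $a^pe$ ($p,i\in\mathbb{Z}$) and $0$. $x\mathcal{L}y$ iff $Mx=My$; $M$ acts on $M/\mathcal{L}$ by $L_x\cdot m=L_{xm}$; this action is residually finite iff for all $(s,t)\notin\mathcal{L}$ there is a finite-index right congruence containing $\mathcal{L}$ but not $(s,t)$. *)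

(* the monoid M is given concretely by its normal forms. *)
From Stdlib Require Import ZArith List.
Open Scope Z_scope.

Fixpoint pval2 (p : positive) : nat :=
  match p with xO q => S (pval2 q) | _ => O end.

(* tau(2^k(2r+1)) = 2/3 (2^(2 ceil(k/2)) - 1); tau 0 is never used (set to 0). *)
Definition tau (n : Z) : Z :=
  match n with
  | Z0 => 0
  | Zpos p | Zneg p =>
      let k := pval2 p in
      2 * ((2 ^ (2 * Z.of_nat ((k + 1) / 2)) - 1) / 3)
  end.

(* Normal forms: a^p, a^p b_i, a^p c_i, a^p d, a^p e, 0 *)
Inductive M : Type :=
| mA : Z -> M
| mB : Z -> Z -> M
| mC : Z -> Z -> M
| mD : Z -> M
| mE : Z -> M
| mZero : M.

Definition shift (p : Z) (x : M) : M :=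
  match x with
  | mA q => mA (p + q)
  | mB q i => mB (p + q) i
  | mC q i => mC (p + q) i
  | mD q => mD (p + q)
  | mE q => mE (p + q)
  | mZero => mZero
  end.

Definition bc (p i q j : Z) : M :=
  if Z.eq_dec i j then mD (p + q) else mE (p + q + tau (j - i)).

Definition mul (x y : M) : M :=
  match x, y with
  | mA p, _ => shift p y
  | _, mA q => shift q x
  | mB p i, mC q j => bc p i q j
  | mC q j, mB p i => bc p i q j
  | _, _ => mZero
  end.

Definition one : M := mA 0.
Definition d : M := mD 0.
Definition e : M := mE 0.

Definition Lrel (x y : M) : Prop :=
  forall z, (exists u, z = mul u x) <-> (exists u, z = mul u y).

Definition right_congruence (rho : M -> M -> Prop) : Prop :=
  (forall x, rho x x) /\
  (forall x y, rho x y -> rho y x) /\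
  (forall x y z, rho x y -> rho y z -> rho x z) /\
  (forall x y m, rho x y -> rho (mul x m) (mul y m)).

Definition finite_index (rho : M -> M -> Prop) : Prop :=
  exists l : list M, forall x, exists y, In y l /\ rho x y.

Definition L_action_residually_finite : Prop :=
  forall s t, ~ Lrel s t ->
    exists rho, right_congruence rho /\ finite_index rho /\
      (forall x y, Lrel x y -> rho x y) /\ ~ rho s t.

(* The elements b_i (i in Z) are infinitely many, so a right congruence of
   finite index identifies some b_n and b_m with n <> m.  Multiplying on the
   right by c_m gives a^(tau(m-n)) e rho d, and a^(tau(m-n)) e is L-related
   to e because a is a unit; hence d rho e as soon as L is contained in rho.
   On the other hand d lies in Md but not in Me, so (d, e) is not in L, and
   no such rho separates it: the action on M/L is not residually finite. *)

(* Stdlib first: it also exports a [shift], which must not hide the one of Defs. *)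
From Stdlib Require Import ZArith List Lia Permutation.
From Pilot Require Import Defs.

Lemma shift_shift (s t : Z) (x : M) : shift s (shift t x) = shift (s + t) x.
Proof. destruct x; simpl; try reflexivity; f_equal; lia. Qed.

Lemma shift0 (x : M) : shift 0 x = x.
Proof. now destruct x. Qed.

Lemma mul_shiftl (t : Z) (u x : M) : mul (shift t u) x = shift t (mul u x).
Proof.
  destruct u, x; simpl; unfold bc; try destruct Z.eq_dec; simpl; try reflexivity; f_equal; lia.
Qed.

Lemma mul_shiftr (t : Z) (u x : M) : mul u (shift t x) = shift t (mul u x).
Proof.
  destruct u, x; simpl; unfold bc; try destruct Z.eq_dec; simpl; try reflexivity; f_equal; lia.
Qed.

Lemma Lrel_shift (t : Z) (x : M) : Lrel (shift t x) x.
Proof.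
  intro z; split; intros [u ->].
  - exists (shift t u). now rewrite mul_shiftr, mul_shiftl.
  - exists (shift (- t) u). now rewrite mul_shiftr, mul_shiftl, shift_shift, Z.add_opp_diag_r, shift0.
Qed.

Lemma mul_b_c_eq (i : Z) : mul (mB 0 i) (mC 0 i) = d.
Proof. simpl; unfold bc; now destruct Z.eq_dec. Qed.

Lemma mul_b_c_neq (i j : Z) :
  i <> j -> mul (mB 0 i) (mC 0 j) = shift (tau (j - i)) e.
Proof. intro Hij; simpl; unfold bc; destruct Z.eq_dec; simpl; [lia | f_equal; lia]. Qed.

Lemma mul_e_neq_d (u : M) : mul u e <> d.
Proof. destruct u; discriminate. Qed.

Lemma not_Lrel_d_e : ~ Lrel d e.
Proof.
  intro H. destruct (proj1 (H d) (ex_intro _ one eq_refl)) as [u Hu].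
  exact (mul_e_neq_d u (eq_sym Hu)).
Qed.

Lemma finite_index_collision (rho : M -> M -> Prop) (g : nat -> M) :
  (forall x y, rho x y -> rho y x) ->
  (forall x y z, rho x y -> rho y z -> rho x z) ->
  finite_index rho -> exists n m, n <> m /\ rho (g n) (g m).
Proof.
  intros Hsym Htrans [l Hl].
  set (ns := seq 0 (S (length l))).
  assert (Hcover : Forall (fun n => Exists (fun y => rho (g n) y) l) ns).
  { apply Forall_forall; intros n _.
    destruct (Hl (g n)) as [y [Hy Hny]]. apply Exists_exists; eauto. }
  assert (Hlen : (length l < length ns)%nat) by (unfold ns; rewrite length_seq; lia).
  destruct (Permutation_pigeonhole_rel _ Hcover Hlen)
    as [n [m [ns' [Hperm [y [_ [Hny Hmy]]]]]]].
  assert (Hnodup : NoDup (n :: m :: ns'))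
    by exact (Permutation_NoDup Hperm (seq_NoDup _ _)).
  exists n, m; split.
  - intros ->. inversion Hnodup as [|? ? Hnotin]. apply Hnotin; now left.
  - eauto.
Qed.

Lemma finite_index_Lcongruence_d_e (rho : M -> M -> Prop) :
  right_congruence rho -> finite_index rho ->
  (forall x y, Lrel x y -> rho x y) -> rho d e.
Proof.
  intros [_ [Hsym [Htrans Hmul]]] Hfin HL.
  destruct (finite_index_collision rho (fun n => mB 0 (Z.of_nat n)) Hsym Htrans Hfin)
    as [n [m [Hnm Hb]]].
  assert (Hbc := Hmul _ _ (mC 0 (Z.of_nat m)) Hb).
  rewrite mul_b_c_neq, mul_b_c_eq in Hbc by lia.
  eauto using Lrel_shift.
Qed.

Theorem mainTheorem15 :
  (forall rho : M -> M -> Prop,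
      right_congruence rho -> finite_index rho ->
      (forall x y, Lrel x y -> rho x y) -> rho d e) /\
  ~ Lrel d e /\
  ~ L_action_residually_finite.
Proof.
  split; [exact finite_index_Lcongruence_d_e|].
  split; [exact not_Lrel_d_e|].
  intro Hrf. destruct (Hrf d e not_Lrel_d_e) as [rho [Hcongr [Hfin [HL Hsep]]]].
  exact (Hsep (finite_index_Lcongruence_d_e rho Hcongr Hfin HL)).
Qed.
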